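(* Let $H$ be a hypergraph and $K$ a field, and let $f_{\mathcal E}\in I_H$ be the binomial arising from a balanced edge set $\mathcal E$ with $\operatorname{supp}(\mathcal E)\subseteq E(H)$ and $n=|\mathcal E_{blue}|\ge|\mathcal E_{red}|$. Then $f_{\mathcal E}$ is a linear combination, with coefficients in $K[t_e : e\in E(H)]$, of binomials in $I_H$ of degree less than $n$, provided one of the following two conditions holds: (i) there exists a proper splitting set $S$ of $\mathcal E$ with decomposition $(\Gamma_1,S,\Gamma_2)$ (with respect to which $S$ is proper) such that $|\Gamma_{i,blue}|<n$ and $|\Gamma_{i,red}|<n$ for $i=1,2$; or (ii) there is a blue splitting set $S$ of $\mathcal E$ with decomposition $(\Gamma_1,S,\Gamma_2)$ and a red splitting set $R$ of $\mathcal E$ with decomposition $(\Upsilon_1,R,\Upsilon_2)$, both of size less than $n$, such that $|\Gamma_{1,blue}|<n$, $|\Upsilon_{2,red}|<n$, $|\Gamma_{2,blue}|\le n$, $|\Upsilon_{1,red}|\le n$, and $S\cap R\neq\emptyset$.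
   Context: A hypergraph $H$ has vertex set $V=\{1,\dots,m\}$ and a set $E(H)$ of edges, each a nonempty subset of $V$ (no repeated edges); edges may have different sizes. The toric ideal $I_H$ is the kernel of $\phi_H: K[t_e : e\in E(H)]\to K[x_1,\dots,x_m]$, $t_e\mapsto\prod_{j\in e}x_j$. The degree of a binomial $u-v$ is the larger of the degrees of its monomials $u$, $v$. Multisets of edges: $|M|$ is the size with multiplicity; $\operatorname{supp}(M)$ the set of distinct elements; $\sqcup$ adds multiplicities; $\cap$ takes minimum multiplicities; $\subseteq$ is multiplicity-wise containment, and a proper submultiset is a contained, unequal one. A balanced edge set $\mathcal E$ is a pair of finite multisets $\mathcal E_{blue},\mathcal E_{red}$ of edges such that every vertex lies in the same number of blue as red edges, counted with multiplicity; $\operatorname{supp}(\mathcal E)=\operatorname{supp}(\mathcal E_{blue}\sqcup\mathcal E_{red})$; $f_{\mathcal E}=\prod_{e\in\mathcal E_{blue}}t_e-\prod_{e\in\mathcal E_{red}}t_e$ (with multiplicity). A balanced edge set $\mathcal F$ is reducible with separator $S$ and decomposition $(\Gamma_1,S,\Gamma_2)$ if $S$ is a nonempty multiset with $\operatorname{supp}(S)\subseteq\operatorname{supp}(\mathcal F)$ and there are balanced edge sets $\Gamma_1\neq\mathcal F$, $\Gamma_2\neq\mathcal F$ with $S=\Gamma_{1,red}\cap\Gamma_{2,blue}$, $\mathcal F_{blue}\sqcup\mathcal F_{red}=\Gamma_{1,blue}\sqcup\Gamma_{1,red}\sqcup\Gamma_{2,blue}\sqcup\Gamma_{2,red}$,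 $\Gamma_{1,red},\Gamma_{2,red}\subseteq\mathcal F_{red}$ and $\Gamma_{1,blue},\Gamma_{2,blue}\subseteq\mathcal F_{blue}$. $S$ is proper with respect to $(\Gamma_1,S,\Gamma_2)$ if $S$ is a proper submultiset of both $\Gamma_{1,red}$ and $\Gamma_{2,blue}$; if not proper, it is blue with respect to the decomposition if $\Gamma_{1,red}=S$ and red if $\Gamma_{2,blue}=S$. For a multiset $S$ of edges, $\mathcal E+S$ has blue part $\mathcal E_{blue}\sqcup S$ and red part $\mathcal E_{red}\sqcup S$. A nonempty multiset $S$ with $\operatorname{supp}(S)\subseteq E(H)$ is a splitting set of $\mathcal E$ with decomposition $(\Gamma_1,S,\Gamma_2)$ if $\mathcal E+S$ is reducible with separator $S$ and that decomposition; it is a blue (resp. red) splitting set with respect to the decomposition if $S$ is a blue (resp. red) separator of $\mathcal E+S$ with respect to it; it is proper if there is a decomposition with respect to which $S$ is a proper separator. *)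

From HB Require Import structures.
From mathcomp Require Import all_boot all_order all_algebra.
From mathcomp Require Import mpoly.
Set Implicit Arguments. Unset Strict Implicit. Unset Printing Implicit Defensive.
Import GRing.Theory.
Local Open Scope ring_scope.

(* A hypergraph on vertex set 'I_m (= {1,...,m} relabelled) is given by its
   edge set EH : {set {set 'I_m}} (edges nonempty, stated in the theorem).
   [edge EH] is the finite type of edges e \in EH. *)
Definition edge (m : nat) (EH : {set {set 'I_m}}) := {e : {set 'I_m} | e \in EH}.
HB.instance Definition _ m EH := Finite.on (@edge m EH).

Definition nE (m : nat) (EH : {set {set 'I_m}}) := #|{: edge EH}|.

(* Finite multisets of edges: multiplicity functions. *)
Definition mset (m : nat) (EH : {set {set 'I_m}}) := {ffun edge EH -> nat}.

Section MS.
Variables (m : nat) (EH : {set {set 'I_m}}).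
Implicit Types A B : mset EH.
Definition mcard A : nat := (\sum_e A e)%N.
Definition munion A B : mset EH := [ffun e => (A e + B e)%N].
Definition mcap A B : mset EH := [ffun e => minn (A e) (B e)].
Definition msub A B : bool := [forall e, (A e <= B e)%N].
Definition mproper A B : bool := msub A B && (A != B).
Definition mempty A : bool := [forall e, A e == 0%N].
Definition msupp_sub A B : bool := [forall e, (A e != 0%N) ==> (B e != 0%N)].
End MS.

(* A balanced edge set: pair (blue, red) of multisets of edges such that every
   vertex lies in the same number of blue as red edges (with multiplicity). *)
Record bes (m : nat) (EH : {set {set 'I_m}}) := Bes { blue : mset EH ; red : mset EH }.

Section Balanced.
Variables (m : nat) (EH : {set {set 'I_m}}).
Definition balanced (F : bes EH) : Prop :=
  forall j : 'I_m,
    (\sum_(e : edge EH | j \in val e) blue F e)%N =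
    (\sum_(e : edge EH | j \in val e) red F e)%N.

(* supp(F) = supp(F_blue ⊔ F_red) *)
Definition bes_all (F : bes EH) : mset EH := munion (blue F) (red F).

Definition reducible (F : bes EH) (G1 : bes EH) (S : mset EH) (G2 : bes EH) : Prop :=
  [/\ ~~ mempty S, msupp_sub S (bes_all F),
      balanced G1 /\ balanced G2, G1 <> F /\ G2 <> F
    & [/\ S = mcap (red G1) (blue G2),
      bes_all F = munion (munion (munion (blue G1) (red G1)) (blue G2)) (red G2),
      msub (red G1) (red F) /\ msub (red G2) (red F)
    & msub (blue G1) (blue F) /\ msub (blue G2) (blue F)]].

Definition proper_sep (G1 : bes EH) (S : mset EH) (G2 : bes EH) : bool :=
  mproper S (red G1) && mproper S (blue G2).
(* blue / red separator (only when not proper; G1_red = S already excludes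
   properness, and likewise G2_blue = S) *)
Definition blue_sep (G1 : bes EH) (S : mset EH) (G2 : bes EH) : Prop :=
  ~~ proper_sep G1 S G2 /\ red G1 = S.
Definition red_sep (G1 : bes EH) (S : mset EH) (G2 : bes EH) : Prop :=
  ~~ proper_sep G1 S G2 /\ blue G2 = S.

Definition bes_addS (E : bes EH) (S : mset EH) : bes EH :=
  Bes (munion (blue E) S) (munion (red E) S).

Definition splitting (E : bes EH) (G1 : bes EH) (S : mset EH) (G2 : bes EH) : Prop :=
  ~~ mempty S /\ reducible (bes_addS E S) G1 S G2.
End Balanced.

Section Toric.
Variables (K : fieldType) (m : nat) (EH : {set {set 'I_m}}).

Definition tvar (e : edge EH) : {mpoly K[nE EH]} := 'X_(enum_rank e).
Definition tmono (M : mset EH) : {mpoly K[nE EH]} := \prod_e tvar e ^+ M e.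
Definition fbin (E : bes EH) : {mpoly K[nE EH]} := tmono (blue E) - tmono (red E).

(* phi_H : t_e |-> prod_{j in e} x_j *)
Definition phiH (p : {mpoly K[nE EH]}) : {mpoly K[m]} :=
  comp_mpoly [tuple (\prod_(j in val (enum_val i)) 'X_j : {mpoly K[m]}) | i < nE EH] p.
Definition in_IH (p : {mpoly K[nE EH]}) : Prop := phiH p = 0.

Definition binomial_IH_lt (n : nat) (b : {mpoly K[nE EH]}) : Prop :=
  exists u v : 'X_{1.. nE EH},
    [/\ b = 'X_[u] - 'X_[v], in_IH b & (maxn (mdeg u) (mdeg v) < n)%N].

Definition lincomb_lowdeg (n : nat) (p : {mpoly K[nE EH]}) : Prop :=
  exists (k : nat) (c b : 'I_k -> {mpoly K[nE EH]}),
    (forall i, binomial_IH_lt n (b i)) /\ p = \sum_(i < k) c i * b i.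
End Toric.

From Pilot Require Import Defs.
From HB Require Import structures.
From mathcomp Require Import all_boot all_order all_algebra.
From mathcomp Require Import mpoly.
From mathcomp Require Import zify.
Set Implicit Arguments. Unset Strict Implicit. Unset Printing Implicit Defensive.
Import GRing.Theory.

(* If [E + S] splits as [(G1, S, G2)], write [D+ = (G1b + G2b) - (Eb + S)] and
   [D- = (Eb + S) - (G1b + G2b)] (truncated); [D+] and [D-] are balanced
   against each other, and [Eb] is joined to [Er] by the chain
     Eb = (Eb - D-) + D- ~ (Eb - D-) + D+ = (G2b - S) + G1b ~ (G2b - S) + G1r
        = (G1r - S) + G2b ~ (G1r - S) + G2r = (Er - D+) + D- ~ (Er - D+) + D+ = Er,
   where each [~] replaces a balanced multiset by its partner and hence
   multiplies a binomial of [I_H] by a monomial.  As [D+ <= Gib] and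
   [D- <= Gir], the four binomials have degree below [n] in case (i).  For a
   blue [S] and a red [R] one runs the first half of the chain for [S],
   reaching [G2b], and the second half for [R], starting from [U1r]; [G2b] and
   [U1r] have the same vertex degrees and share the nonempty [S ∩ R], so
   cancelling it leaves a binomial of degree below [n]. *)

Section Multisets.
Variables (m : nat) (EH : {set {set 'I_m}}).
Implicit Types A B C : mset EH.

Definition mdiff A B : mset EH := [ffun e => A e - B e]%N.

Definition vdeg A (j : 'I_m) : nat := (\sum_(e : edge EH | j \in val e) A e)%N.

Lemma mset_eqP A B : (forall e, A e = B e) -> A = B.
Proof. by move=> eqAB; apply/ffunP. Qed.

Lemma vdegD A B j : vdeg (munion A B) j = (vdeg A j + vdeg B j)%N.
Proof. by rewrite /vdeg -big_split; apply: eq_bigr => e _; rewrite ffunE. Qed.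

Lemma mcardD A B : mcard (munion A B) = (mcard A + mcard B)%N.
Proof. by rewrite /mcard -big_split; apply: eq_bigr => e _; rewrite ffunE. Qed.

Lemma mcard_le A B : (forall e, A e <= B e)%N -> (mcard A <= mcard B)%N.
Proof. by move=> leAB; apply: leq_sum => e _. Qed.

Lemma mcard_gt0 A : ~~ mempty A -> (0 < mcard A)%N.
Proof. by move=> /forallPn [e Ae]; rewrite /mcard (bigD1 e) //=; lia. Qed.

Lemma munion_mdiffvv A B : munion (mdiff A A) B = B.
Proof. by apply: mset_eqP => e; rewrite !ffunE subnn. Qed.

Lemma munion_mdiffK C A : (forall e, C e <= A e)%N -> munion C (mdiff A C) = A.
Proof. by move=> leCA; apply: mset_eqP => e; rewrite !ffunE subnKC. Qed.

Section Reducible.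
Variables (E G1 G2 : bes EH) (S : mset EH).
Hypotheses (balE : balanced E) (redES : reducible (bes_addS E S) G1 S G2).

Let Dp := mdiff (munion (blue G1) (blue G2)) (munion (blue E) S).
Let Dn := mdiff (munion (blue E) S) (munion (blue G1) (blue G2)).

Lemma reducible_pointwise e :
  [/\ S e = minn (red G1 e) (blue G2 e),
      blue E e + S e + (red E e + S e) =
        blue G1 e + red G1 e + blue G2 e + red G2 e,
      red G1 e <= red E e + S e /\ red G2 e <= red E e + S e
    & blue G1 e <= blue E e + S e /\ blue G2 e <= blue E e + S e]%N.
Proof.
case: redES => _ _ _ _ [defS + [rG1 rG2] [bG1 bG2]].
move=> /(congr1 (fun A : mset EH => A e)).
rewrite /bes_all /= !ffunE => total; split => //; first by rewrite defS ffunE.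
  by split; [move/forallP/(_ e): rG1 | move/forallP/(_ e): rG2]; rewrite /= ffunE.
by split; [move/forallP/(_ e): bG1 | move/forallP/(_ e): bG2]; rewrite /= ffunE.
Qed.

Ltac pointwise := apply: mset_eqP; let e := fresh "e" in move=> e;
  rewrite !ffunE; case: (reducible_pointwise e) => ? ? [? ?] [? ?]; lia.

Lemma excess_le e :
  [/\ Dp e <= blue G1 e, Dp e <= blue G2 e, Dn e <= red G1 e & Dn e <= red G2 e]%N.
Proof.
rewrite !ffunE; case: (reducible_pointwise e) => ? ? [? ?] [? ?]; split; lia.
Qed.

(* Count vertex degrees in [Dp + (Eb + S) = (G1b + G2b) + Dn], using the
   balance of [E], [G1], [G2] and the total-count condition of [reducible]. *)
Lemma excess_balanced j : vdeg Dn j = vdeg Dp j.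
Proof.
case: (redES) => _ _ [balG1 balG2] _ [_ total _ _].
have sum_total := congr1 (vdeg^~ j) total; rewrite /bes_all /= !vdegD in sum_total.
have swap : munion Dp (munion (blue E) S) = munion (munion (blue G1) (blue G2)) Dn.
  by pointwise.
have := congr1 (vdeg^~ j) swap; rewrite !vdegD.
move: (balE j) (balG1 j) (balG2 j) sum_total; rewrite /vdeg; lia.
Qed.

Lemma blue_excess_split : blue E = munion (mdiff (blue E) Dn) Dn.
Proof. by pointwise. Qed.

Lemma blue_excess_G1 :
  munion (mdiff (blue E) Dn) Dp = munion (mdiff (blue G2) S) (blue G1).
Proof. by pointwise. Qed.

Lemma separator_swap :
  munion (mdiff (blue G2) S) (red G1) = munion (mdiff (red G1) S) (blue G2).
Proof. by pointwise. Qed.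

Lemma G2_red_excess :
  munion (mdiff (red G1) S) (red G2) = munion (mdiff (red E) Dp) Dn.
Proof. by pointwise. Qed.

Lemma red_excess_split : munion (mdiff (red E) Dp) Dp = red E.
Proof. by pointwise. Qed.

End Reducible.
End Multisets.

Section Toric.
Variables (K : fieldType) (m : nat) (EH : {set {set 'I_m}}).
Local Open Scope ring_scope.
Implicit Types (A B C P Q W : mset EH).
Local Notation tmono := (@Defs.tmono K m EH).

Lemma big_edge_enum (R : Type) (idx : R) (op : Monoid.com_law idx) (F : edge EH -> R) :
  \big[op/idx]_(i < nE EH) F (enum_val i) = \big[op/idx]_e F e.
Proof. by rewrite /nE (big_enum_val (A := {: edge EH})). Qed.

Definition mset_mnm A : 'X_{1.. nE EH} := [multinom A (enum_val i) | i < nE EH].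

Lemma tmonoE A : tmono A = 'X_[mset_mnm A].
Proof.
rewrite mpolyXE_id /tmono -big_edge_enum; apply: eq_bigr => i _.
by rewrite /tvar enum_valK mnmE.
Qed.

Lemma mdeg_mset_mnm A : mdeg (mset_mnm A) = mcard A.
Proof.
rewrite mdegE /mcard -big_edge_enum.
by apply: eq_bigr => i _; rewrite mnmE.
Qed.

Lemma tmonoD A B : tmono (munion A B) = tmono A * tmono B.
Proof.
by rewrite /tmono -big_split /=; apply: eq_bigr => e _; rewrite ffunE exprD.
Qed.

Lemma phiH_tmono A : phiH (tmono A) = \prod_(j < m) 'X_j ^+ vdeg A j.
Proof.
rewrite tmonoE /phiH comp_mpolyX.
under eq_bigr => i _ do rewrite tnth_mktuple mnmE.
rewrite (big_edge_enum _ (fun e => (\prod_(j in val e) 'X_j : {mpoly K[m]}) ^+ A e)).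
under eq_bigr => e _ do rewrite -prodrXl big_mkcond /=.
rewrite exchange_big /=; apply: eq_bigr => j _.
rewrite /vdeg -prodrXr [RHS]big_mkcond /=; apply: eq_bigr => e _.
by case: ifP.
Qed.

Lemma binomial_IH_lt_tmono n P Q :
  vdeg P =1 vdeg Q -> (maxn (mcard P) (mcard Q) < n)%N ->
  binomial_IH_lt n (tmono P - tmono Q).
Proof.
move=> degPQ ltPQn; exists (mset_mnm P), (mset_mnm Q).
rewrite !mdeg_mset_mnm -!tmonoE; split => //.
rewrite /in_IH /phiH comp_mpolyB -/(phiH _) -/(phiH _) !phiH_tmono.
by under eq_bigr => j _ do rewrite degPQ; rewrite subrr.
Qed.

Lemma lincomb_lowdegD n p q :
  lincomb_lowdeg n p -> lincomb_lowdeg n q -> @lincomb_lowdeg K m EH n (p + q).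
Proof.
move=> [k1 [c1 [b1 [bin1 ->]]]] [k2 [c2 [b2 [bin2 ->]]]].
exists (k1 + k2)%N.
exists (fun i => match split i with inl j => c1 j | inr j => c2 j end).
exists (fun i => match split i with inl j => b1 j | inr j => b2 j end).
split; first by move=> i; case: (split i).
rewrite big_split_ord /=; congr (_ + _); apply: eq_bigr => i _.
  by rewrite (unsplitK (inl _ i)).
by rewrite (unsplitK (inr _ i)).
Qed.

Lemma lincomb_lowdeg_mul n c b :
  binomial_IH_lt n b -> @lincomb_lowdeg K m EH n (c * b).
Proof. by move=> binb; exists 1%N, (fun=> c), (fun=> b); rewrite big_ord1. Qed.

Definition linked n A B :=
  vdeg A =1 vdeg B /\ @lincomb_lowdeg K m EH n (tmono A - tmono B).

Lemma linked_trans n B A C : linked n A B -> linked n B C -> linked n A C.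
Proof.
move=> [degAB linAB] [degBC linBC]; split; first by move=> j; rewrite degAB.
by rewrite -[tmono A](subrK (tmono B)) -addrA; apply: lincomb_lowdegD.
Qed.

Lemma linked_move n W P Q :
  vdeg P =1 vdeg Q -> (mcard P < n)%N -> (mcard Q < n)%N ->
  linked n (munion W P) (munion W Q).
Proof.
move=> degPQ ltPn ltQn; split; first by move=> j; rewrite !vdegD degPQ.
rewrite !tmonoD -mulrBr; apply: lincomb_lowdeg_mul.
by apply: binomial_IH_lt_tmono; rewrite // gtn_max ltPn ltQn.
Qed.

Lemma linked_common n C A B :
  ~~ mempty C -> (forall e, C e <= A e)%N -> (forall e, C e <= B e)%N ->
  (mcard A <= n)%N -> (mcard B <= n)%N -> vdeg A =1 vdeg B -> linked n A B.
Proof.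
move=> C_ne leCA leCB leAn leBn degAB.
have C_gt0 := mcard_gt0 C_ne.
rewrite -(munion_mdiffK leCA) -(munion_mdiffK leCB) in leAn leBn degAB *.
apply: linked_move.
- by move=> j; move: (degAB j); rewrite !vdegD; lia.
- by move: leAn; rewrite mcardD; lia.
- by move: leBn; rewrite mcardD; lia.
Qed.

Section Splitting.
Variables (E G1 G2 : bes EH) (S : mset EH) (n : nat).
Hypotheses (balE : balanced E) (redES : reducible (bes_addS E S) G1 S G2).

Lemma linked_blue_separator :
  (mcard (blue G1) < n)%N -> (mcard (red G1) < n)%N ->
  linked n (blue E) (munion (mdiff (blue G2) S) (red G1)).
Proof.
move=> ltG1b ltG1r; have [_ _ [balG1 _] _ _] := redES.
apply: (linked_trans (B := munion (mdiff (blue G2) S) (blue G1))); last first.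
  by apply: linked_move ltG1b ltG1r => j; exact: balG1.
rewrite -(blue_excess_G1 redES) {1}(blue_excess_split redES).
apply: linked_move; first exact: excess_balanced.
- by apply: leq_ltn_trans ltG1r; apply: mcard_le => e; case: (excess_le redES e).
- by apply: leq_ltn_trans ltG1b; apply: mcard_le => e; case: (excess_le redES e).
Qed.

Lemma linked_separator_red :
  (mcard (blue G2) < n)%N -> (mcard (red G2) < n)%N ->
  linked n (munion (mdiff (red G1) S) (blue G2)) (red E).
Proof.
move=> ltG2b ltG2r; have [_ _ [_ balG2] _ _] := redES.
apply: (linked_trans (B := munion (mdiff (red G1) S) (red G2))).
  by apply: linked_move ltG2b ltG2r => j; exact: balG2.
rewrite (G2_red_excess redES) -{2}(red_excess_split redES).
apply: linked_move; first exact: excess_balanced.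
- by apply: leq_ltn_trans ltG2r; apply: mcard_le => e; case: (excess_le redES e).
- by apply: leq_ltn_trans ltG2b; apply: mcard_le => e; case: (excess_le redES e).
Qed.

End Splitting.
End Toric.

Theorem proposition5p3 (K : fieldType) (m : nat) (EH : {set {set 'I_m}})
  (Hne : set0 \notin EH) (E : bes EH) (n : nat)
  (Hbal : balanced E) (Hn : mcard (blue E) = n) (Hnr : (mcard (red E) <= n)%N) :
  ((exists (S : mset EH) (G1 G2 : bes EH),
      [/\ splitting E G1 S G2, proper_sep G1 S G2,
          (mcard (blue G1) < n)%N /\ (mcard (red G1) < n)%N
        & (mcard (blue G2) < n)%N /\ (mcard (red G2) < n)%N])
   \/
   (exists (S R : mset EH) (G1 G2 U1 U2 : bes EH),
      [/\ splitting E G1 S G2 /\ blue_sep G1 S G2,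
          splitting E U1 R U2 /\ red_sep U1 R U2,
          (mcard S < n)%N /\ (mcard R < n)%N
        & [/\ (mcard (blue G1) < n)%N, (mcard (red U2) < n)%N,
              (mcard (blue G2) <= n)%N, (mcard (red U1) <= n)%N
            & ~~ mempty (mcap S R)]])) ->
  @lincomb_lowdeg K m EH n (@fbin K m EH E).
Proof.
move=> cases; suff [_] : linked K n (blue E) (red E) by [].
case: cases => [[S [G1 [G2 [[_ redS] _ [ltG1b ltG1r] [ltG2b ltG2r]]]]] |
  [S [R [G1 [G2 [U1 [U2 [[[_ redS] [_ G1rS]] [[_ redR] [_ U2bR]]
   [ltS ltR] [ltG1b ltU2r leG2b leU1r SR_ne]]]]]]]]].
  apply: linked_trans (linked_blue_separator K Hbal redS ltG1b ltG1r) _.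
  by rewrite (separator_swap redS); exact: linked_separator_red.
have linkS : linked K n (blue E) (blue G2).
  move: (linked_blue_separator K Hbal redS ltG1b).
  by rewrite (separator_swap redS) G1rS munion_mdiffvv; apply.
have linkR : linked K n (red U1) (red E).
  move: (linked_separator_red K (n := n) Hbal redR).
  by rewrite -(separator_swap redR) U2bR munion_mdiffvv; apply.
apply: (linked_trans linkS (linked_trans _ linkR)).
apply: (linked_common K SR_ne) _ _ leG2b leU1r _.
- by move=> e; case: (reducible_pointwise redS e); rewrite ffunE; lia.
- by move=> e; case: (reducible_pointwise redR e); rewrite ffunE; lia.
- by move=> j; rewrite -linkS.1 linkR.1; exact: Hbal.
Qed.
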